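(* Let $X$ be a countably infinite set, $\mathscr{A}=2^X$, $\mu$ a measure on $\mathscr{A}$ with $\mu(x):=\mu(\{x\})<\infty$ for all $x\in X$, and $\phi$ an injective nonsingular transformation of $X$. Assume $P\colon X\times\mathfrak{B}(\mathbb{R}_+)\to[0,1]$ is a family of probability measures satisfying (CC): $\mathsf{E}(P(\cdot,\sigma))(x)=\dfrac{\int_\sigma t\,P(\phi(x),\mathrm{d}t)}{\mathsf{h}_\phi(\phi(x))}$ for $\mu$-a.e. $x\in X$, for every $\sigma\in\mathfrak{B}(\mathbb{R}_+)$. Then (i) $\int_\sigma t^n P(\phi^n(x),\mathrm{d}t)=\mathsf{h}_{\phi^n}(\phi^n(x))\cdot P(x,\sigma)$ for all $\sigma\in\mathfrak{B}(\mathbb{R}_+)$, $n\in\mathbb{Z}_+$ and $x\in X$ with $\mu(x)>0$. Moreover, if $\mu(x)>0$ for every $x\in X$, then (ii) $\int_\sigma t^nP(x,\mathrm{d}t)=\mathsf{h}_{\phi^n}(x)\cdot P\big((\phi^n)^{-1}(x),\sigma\big)$ for all $\sigma\in\mathfrak{B}(\mathbb{R}_+)$, $x\in\phi^n(X)$ and $n\in\mathbb{Z}_+$.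
   Context: $\mathbb{R}_+=[0,\infty)$, $\mathbb{Z}_+=\{0,1,\dots\}$. $\phi$ nonsingular means $\mu(\phi^{-1}(\{x\}))=0$ whenever $\mu(x)=0$. $\phi^n$ is the $n$-fold composition and $\mathsf{h}_{\phi^n}(x)=\mu(\phi^{-n}(\{x\}))/\mu(x)$, with $\mathsf{h}_{\phi^n}(x)=1$ if $\mu(x)=0$ (convention $0/0=1$; also $1/0=\infty$, $0\cdot\infty=0$). $\mathsf{E}(f)$ is the conditional expectation of $f\colon X\to[0,\infty]$ w.r.t. the $\sigma$-algebra $\phi^{-1}(2^X)$: the a.e. unique $\phi^{-1}(2^X)$-measurable function with $\int(g\circ\phi)f\,\mathrm{d}\mu=\int(g\circ\phi)\mathsf{E}(f)\,\mathrm{d}\mu$ for all $g\colon X\to[0,\infty]$. A family of probability measures: each $P(x,\cdot)$ is a Borel probability measure on $\mathbb{R}_+$. *)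

From HB Require Import structures.
From mathcomp Require Import all_boot all_order all_algebra.
From mathcomp Require Import all_classical all_reals all_analysis.
From mathcomp Require Import measurable_realfun lebesgue_measure lebesgue_integral probability.
Set Implicit Arguments. Unset Strict Implicit. Unset Printing Implicit Defensive.
Import Order.TTheory GRing.Theory Num.Theory.
Local Open Scope classical_set_scope.
Local Open Scope ring_scope.
Local Open Scope ereal_scope.

(* Inverse on [0,+oo] with the paper's conventions 1/0 = +oo, 1/+oo = 0. *)
Definition einv (R : realType) (b : \bar R) : \bar R :=
  match b with
  | r%:E => if r == 0%R then +oo else (r^-1)%:E
  | +oo => 0
  | -oo => 0
  end.

(* a / b := a * (1/b); with 0 * +oo = 0 (mathcomp-analysis convention). *)
Definition ediv (R : realType) (a b : \bar R) : \bar R := a * einv b.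

(* h_{phi^n}(y) = mu(phi^{-n}({y})) / mu({y}), and := 1 when mu({y}) = 0.
   mu({y}) is assumed finite, so [fine] is exact there. *)
Definition hn (d : measure_display) (X : measurableType d) (R : realType)
  (mu : set X -> \bar R) (phi : X -> X) (n : nat) (y : X) : \bar R :=
  if mu [set y] == 0 then 1
  else mu (iter n phi @^-1` [set y]) * ((fine (mu [set y]))^-1)%:E.

(* g is a version of the conditional expectation E(f) w.r.t. the
   sigma-algebra phi^{-1}(2^X): g : X -> [0,+oo] is phi^{-1}(2^X)-measurable
   and int (h o phi) f dmu = int (h o phi) g dmu for all h : X -> [0,+oo]. *)
Definition is_condexp (d : measure_display) (X : measurableType d) (R : realType)
  (mu : {measure set X -> \bar R}) (phi : X -> X) (f g : X -> \bar R) : Prop :=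
  (forall x, 0 <= g x) /\
  (forall B : set (\bar R), measurable B ->
     exists A : set X, g @^-1` B = phi @^-1` A) /\
  (forall h : X -> \bar R, (forall x, 0 <= h x) ->
     \int[mu]_x (h (phi x) * f x) = \int[mu]_x (h (phi x) * g x)).

From HB Require Import structures.
From mathcomp Require Import all_boot all_order all_algebra.
From mathcomp Require Import all_classical all_reals all_analysis.
From mathcomp Require Import measurable_realfun lebesgue_measure lebesgue_integral probability.
From mathcomp Require Import ring.
Set Implicit Arguments. Unset Strict Implicit. Unset Printing Implicit Defensive.
Import Order.TTheory GRing.Theory Num.Theory HBNNSimple.
Local Open Scope classical_set_scope.
Local Open Scope ring_scope.
Local Open Scope ereal_scope.

(* Since phi is injective, the phi-orbit of a point x with mu{x} > 0 consists
   of atoms of positive mass, and h_{phi^n}(phi^n x) = mu{x} / mu{phi^n x}.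
   Conditional expectation w.r.t. phi^{-1}(2^X) = 2^X is the identity, so (CC)
   holds at every atom of positive mass: on [0,+oo[ the measure
   t P(phi x, dt) is mu{x}/mu{phi x} times P(x, .).  Iterating this density
   relation along the orbit multiplies the densities t and the mass ratios
   telescope, which gives (i); (ii) is (i) read at y = phi^n x. *)

Section integral_mul_density.
Context d (T : measurableType d) (R : realType).
Variables (mu nu : {measure set T -> \bar R}) (g : T -> R) (E : set T).
Hypotheses (mE : measurable E) (g_ge0 : forall x, E x -> (0 <= g x)%R).
Hypothesis mg : measurable_fun E (EFin \o g).
Hypothesis nu_density : forall A, measurable A -> A `<=` E ->
  \int[mu]_(x in A) (g x)%:E = nu A.

Lemma integral_mul_density_nnsfun (h : {nnsfun T >-> R}) :
  \int[mu]_(x in E) ((h x)%:E * (g x)%:E) = \int[nu]_(x in E) (h x)%:E.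
Proof.
transitivity (\int[nu]_(x in E)
   (\sum_(y \in range h) (y * \1_(h @^-1` [set y]) x)%:E)); last first.
  by apply: eq_integral => t tE; rewrite /= fimfunE -fsumEFin.
have mindic r : measurable_fun E (fun x => (r * \1_(h @^-1` [set r]) x)%:E).
  by apply: (measurable_comp measurableT) => //; exact: measurable_funM.
rewrite ge0_integral_fsum//; last first.
  by move=> m y Ey; rewrite EFinM; exact: nnfun_muleindic_ge0.
transitivity (\int[mu]_(x in E) (\sum_(y \in range h)
    (y * \1_(h @^-1` [set y]) x)%:E * (g x)%:E)).
  apply: eq_integral => x xE.
  rewrite -ge0_mule_fsuml => [|y]; last first.
    by rewrite EFinM; exact: nnfun_muleindic_ge0.
  by rewrite fsumEFin // -(fimfunE _ x).
rewrite ge0_integral_fsum//; last 2 first.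
  - by move=> y; exact: emeasurable_funM (mindic y) mg.
  - move=> m y Ey; rewrite mule_ge0 ?lee_fin ?g_ge0//.
    by rewrite -lee_fin EFinM nnfun_muleindic_ge0.
apply: eq_fsbigr => r /[!inE] -[t _ <-].
under [RHS]eq_integral do rewrite EFinM.
rewrite integralZl_indic_nnsfun //.
under eq_integral do rewrite EFinM -muleA.
rewrite ge0_integralZl//; last 3 first.
- by apply: emeasurable_funM => //; exact/measurable_EFinP.
- by move=> x Ex; rewrite mule_ge0 ?lee_fin ?g_ge0.
- by rewrite lee_fin.
under eq_integral do rewrite muleC.
rewrite (eq_integral ((EFin \o g) \_ (h @^-1` [set h t]))); last first.
  by move=> x xE; rewrite epatch_indic.
by rewrite -integral_mkcondr nu_density// integral_indic// setIC.
Qed.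

Lemma integral_mul_density (f : T -> \bar R) :
  (forall x, E x -> 0 <= f x) -> measurable_fun E f ->
  \int[mu]_(x in E) (f x * (g x)%:E) = \int[nu]_(x in E) f x.
Proof.
move=> f_ge0 mf; pose h := nnsfun_approx mE mf.
have hf x : E x -> (EFin \o h n) x @[n --> \oo] --> f x.
  by move=> Ex; exact: cvg_nnsfun_approx.
have hfg x : E x -> (EFin \o h n) x * (g x)%:E @[n --> \oo] --> f x * (g x)%:E.
  by move=> Ex; apply: cvgeZr => //; exact: hf.
have nd_h x : E x -> {homo (fun n => (EFin \o h n) x) : a b / (a <= b)%N >-> a <= b}.
  by move=> Ex a b ab; rewrite lee_fin; exact/lefP/nd_nnsfun_approx.
have mh n : measurable_fun E (EFin \o h n).
  by apply/measurable_EFinP/(measurable_funS measurableT) => //; exact/measurable_funP.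
have -> : \int[nu]_(x in E) f x =
    lim (\int[nu]_(x in E) (EFin \o h n) x @[n --> \oo]).
  under eq_integral => x /[!inE] Ex do rewrite -(cvg_lim _ (hf x Ex)) //.
  by apply: monotone_convergence => // n x Ex; rewrite lee_fin.
have -> : \int[mu]_(x in E) (f x * (g x)%:E) =
    lim (\int[mu]_(x in E) ((EFin \o h n) x * (g x)%:E) @[n --> \oo]).
  under eq_integral => x /[!inE] Ex.
    rewrite -(cvg_lim _ (hfg x Ex)) //; over.
  apply: monotone_convergence => //.
  - by move=> n; exact: emeasurable_funM (mh n) mg.
  - by move=> n x Ex /=; rewrite mule_ge0 ?lee_fin ?g_ge0.
  - move=> x Ex a b ab; apply: lee_wpmul2r; last exact: nd_h.
    by rewrite lee_fin g_ge0.
by under eq_fun do rewrite integral_mul_density_nnsfun.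
Qed.

End integral_mul_density.

Lemma iter_injective (T : Type) (f : T -> T) (n : nat) :
  injective f -> injective (iter n f).
Proof. by move=> f_inj; elim: n => [|n IH] x y //= /f_inj/IH. Qed.

Lemma ae_at_atom d (T : measurableType d) (R : realType)
    (mu : {measure set T -> \bar R}) (Q : T -> Prop) (y : T) :
  measurable [set y] -> {ae mu, forall x, Q x} -> 0 < mu [set y] -> Q y.
Proof.
move=> my [N [mN N0 QN]] muy; apply: contrapT => notQy.
have : mu [set y] <= mu N by apply: le_measure; rewrite ?inE // => z ->; exact: QN.
by rewrite N0 leNgt muy.
Qed.

(* For injective phi the sigma-algebra phi^{-1}(2^X) is all of 2^X. *)
Lemma is_condexp_injective d (T : measurableType d) (R : realType)
    (mu : {measure set T -> \bar R}) (phi : T -> T) (f : T -> \bar R) :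
  injective phi -> (forall x, 0 <= f x) -> is_condexp mu phi f f.
Proof.
move=> phi_inj f_ge0; split=> //; split=> // B _.
exists (phi @` (f @^-1` B)); apply/seteqP; split=> [z fzB|z [w fwB /phi_inj <-//]].
by exists z.
Qed.

Section orbit_atoms.
Context d (X : measurableType d) (R : realType).
Variables (mu : {measure set X -> \bar R}) (phi : X -> X).
Hypotheses (phi_inj : injective phi) (mu_set1_fin : forall x, mu [set x] < +oo).
Hypothesis phi_nonsingular : forall x, mu [set x] = 0 -> mu (phi @^-1` [set x]) = 0.

Local Notation m x := (fine (mu [set x])).

Lemma preimage_iter_set1 n y : iter n phi @^-1` [set iter n phi y] = [set y].
Proof. by apply/seteqP; split=> z /=; [exact: iter_injective|move->]. Qed.

Lemma measure_iter_set1_gt0 n y : 0 < mu [set y] -> 0 < mu [set iter n phi y].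
Proof.
move=> muy; elim: n => [//|n IH] /=; rewrite lt0e measure_ge0 andbT.
apply: contraTneq IH => /phi_nonsingular.
by rewrite (preimage_iter_set1 1) => ->; rewrite ltxx.
Qed.

Lemma fine_measure_set1_gt0 y : 0 < mu [set y] -> (0 < m y)%R.
Proof. by move=> muy; apply: fine_gt0; rewrite muy mu_set1_fin. Qed.

Lemma hn_iterE n y : 0 < mu [set y] ->
  hn mu phi n (iter n phi y) = (m y / m (iter n phi y))%:E.
Proof.
move=> muy; rewrite /hn gt_eqF ?measure_iter_set1_gt0// preimage_iter_set1.
by rewrite -[in LHS](@fineK _ (mu [set y])) ?ge0_fin_numE ?mu_set1_fin.
Qed.

Variable P : X -> probability R R.
Hypothesis measurable_set1 : forall x : X, measurable [set x].
Hypothesis condexp_P :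
  forall sigma : set R, measurable sigma -> sigma `<=` `[0%R, +oo[%classic ->
  forall g : X -> \bar R, is_condexp mu phi (fun x => P x sigma) g ->
  {ae mu, forall x, g x =
     ediv (\int[P (phi x)]_(t in sigma) t%:E) (hn mu phi 1 (phi x))}.

Lemma integral_id_phi (sigma : set R) y :
  measurable sigma -> sigma `<=` `[0%R, +oo[%classic -> 0 < mu [set y] ->
  \int[P (phi y)]_(t in sigma) t%:E = (m y / m (phi y))%:E * P y sigma.
Proof.
move=> msigma sigma_ge0 muy; have k_gt0 : (0 < m y / m (phi y))%R.
  by rewrite divr_gt0 ?fine_measure_set1_gt0 // (measure_iter_set1_gt0 1).
have Pid : is_condexp mu phi (fun x => P x sigma) (fun x => P x sigma).
  exact: is_condexp_injective phi_inj (fun=> measure_ge0 _ _).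
move: (ae_at_atom (measurable_set1 y) (condexp_P msigma sigma_ge0 Pid) muy).
rewrite /ediv (hn_iterE 1 muy) /einv gt_eqF //= => ->.
by rewrite muleCA -EFinM mulfV ?mule1 // gt_eqF.
Qed.

Lemma integral_powS_phi (sigma : set R) n y :
  measurable sigma -> sigma `<=` `[0%R, +oo[%classic -> 0 < mu [set y] ->
  \int[P (phi y)]_(t in sigma) (t ^+ n.+1)%:E =
  (m y / m (phi y))%:E * \int[P y]_(t in sigma) (t ^+ n)%:E.
Proof.
move=> msigma sigma_ge0 muy; set k := (m y / m (phi y))%R.
have k_ge0 : (0 <= k)%R.
  by rewrite divr_ge0 // ltW // fine_measure_set1_gt0 // (measure_iter_set1_gt0 1).
have t_ge0 t : sigma t -> (0 <= t)%R by move=> /sigma_ge0; rewrite /= in_itv /= andbT.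
have mpow : measurable_fun sigma (fun t => (t ^+ n)%:E).
  by apply/measurable_EFinP; exact: exprn_measurable.
have pow_ge0 t : sigma t -> 0 <= (t ^+ n)%:E by move=> /t_ge0 t0; rewrite lee_fin exprn_ge0.
transitivity (\int[P (phi y)]_(t in sigma) ((t ^+ n)%:E * t%:E)).
  by apply: eq_integral => t _; rewrite exprSr EFinM.
rewrite (@integral_mul_density _ _ _ _ (mscale (NngNum k_ge0) (P y)) id) //.
- exact: ge0_integral_mscale.
- exact/measurable_EFinP/measurable_id.
- by move=> A mA sA; rewrite integral_id_phi //; exact: subset_trans sigma_ge0.
Qed.

Lemma integral_pow_iter (sigma : set R) n x :
  measurable sigma -> sigma `<=` `[0%R, +oo[%classic -> 0 < mu [set x] ->
  \int[P (iter n phi x)]_(t in sigma) (t ^+ n)%:E =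
  (m x / m (iter n phi x))%:E * P x sigma.
Proof.
move=> msigma sigma_ge0 mux; elim: n => [|n IH].
  under eq_integral do rewrite expr0.
  by rewrite integral_cst // divff ?mul1e // gt_eqF ?fine_measure_set1_gt0.
have muy := measure_iter_set1_gt0 n mux.
rewrite [iter _ _ _]/= integral_powS_phi // IH muleA -EFinM.
have mx_gt0 := fine_measure_set1_gt0 mux.
have my_gt0 := fine_measure_set1_gt0 muy.
have mz_gt0 := fine_measure_set1_gt0 (measure_iter_set1_gt0 1 muy).
by congr (_%:E * _); rewrite /= in mz_gt0 *; field; rewrite !gt_eqF.
Qed.

End orbit_atoms.

Theorem proposition36 (R : realType) (d : measure_display) (X : measurableType d)
  (mu : {measure set X -> \bar R}) (phi : X -> X)
  (P : X -> probability R R) :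
  countable [set: X] -> infinite_set [set: X] ->
  (forall A : set X, measurable A) ->
  (forall x : X, mu [set x] < +oo) ->
  injective phi ->
  (forall x : X, mu [set x] = 0 -> mu (phi @^-1` [set x]) = 0) ->
  (forall x : X, P x `[0%R, +oo[%classic = 1) ->
  (forall sigma : set R, measurable sigma -> sigma `<=` `[0%R, +oo[%classic ->
     forall g : X -> \bar R, is_condexp mu phi (fun x => P x sigma) g ->
     {ae mu, forall x, g x =
        ediv (\int[P (phi x)]_(t in sigma) t%:E) (hn mu phi 1 (phi x))}) ->
  (forall (sigma : set R) (n : nat) (x : X),
     measurable sigma -> sigma `<=` `[0%R, +oo[%classic -> 0 < mu [set x] ->
     \int[P (iter n phi x)]_(t in sigma) (t ^+ n)%:E
       = hn mu phi n (iter n phi x) * P x sigma) /\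
  ((forall x : X, 0 < mu [set x]) ->
   forall (sigma : set R) (n : nat) (y x : X),
     measurable sigma -> sigma `<=` `[0%R, +oo[%classic ->
     iter n phi x = y ->
     \int[P y]_(t in sigma) (t ^+ n)%:E = hn mu phi n y * P x sigma).
Proof.
move=> _ _ mX mu_set1_fin phi_inj phi_nonsingular _ condexp_P.
have moment (sigma : set R) n x : measurable sigma ->
    sigma `<=` `[0%R, +oo[%classic -> 0 < mu [set x] ->
    \int[P (iter n phi x)]_(t in sigma) (t ^+ n)%:E
      = hn mu phi n (iter n phi x) * P x sigma.
  move=> msigma sigma_ge0 mux; rewrite hn_iterE //.
  by apply: integral_pow_iter => // y; exact: mX.
split=> [sigma n x|mu_gt0 sigma n y x msigma sigma_ge0 <-]; first exact: moment.
exact: moment (mu_gt0 x).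
Qed.
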